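(* Let $k$ be an algebraically closed field of characteristic $2$, $t$ transcendental over $k$, and $f(x)=a_2x^2+a_1x+a_0\in k[x]$ with $a_2a_1\neq0$. Then $\operatorname{Gal}(f^n(x)-t/k(t))\cong(C_2)^n$ for all $n\in\mathbb N$, where $C_2$ is the cyclic group of order $2$.
   Context: $f^n$ is $n$-fold composition; $\operatorname{Gal}(f^n(x)-t/k(t))$ is the Galois group of the splitting field of $f^n(x)-t$ over $k(t)$. *)

From HB Require Import structures.
From mathcomp Require Import all_boot all_order all_algebra all_fingroup all_solvable all_field fraction.
Set Implicit Arguments. Unset Strict Implicit. Unset Printing Implicit Defensive.
Import GRing.Theory.
Local Open Scope ring_scope.

Notation ratfun k := {fraction {poly k}}.

Definition poly_iter (R : nzRingType) (f : {poly R}) (n : nat) : {poly R} :=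
  iter n (fun g => f \Po g) 'X.

Definition kconst (k : fieldType) (c : k) : ratfun k := @FracField.tofrac _ (c%:P).

Definition tvar (k : fieldType) : ratfun k := @FracField.tofrac _ ('X : {poly k}).

Definition iter_minus_t (k : fieldType) (f : {poly k}) (n : nat) : {poly ratfun k} :=
  map_poly (@kconst k) (poly_iter f n) - (tvar k)%:P.

Definition C2pow (n : nat) := [set: 'rV['Z_2]_n].

(* In characteristic 2 every iterate F = f^n of a quadratic f is additive up to
   a constant: F(x + y) = F(x) + F(y) + F(0).  Hence two roots of F(X) - t differ
   by a root of F(X) - F(0), which lies in the algebraically closed field k.  So
   the splitting field is k(t)(x) for any single root x, and every automorphism
   is a translation x |-> x + c with c in k, of order at most 2.  As F' = a1^n is
   a nonzero constant, F(X) - t is separable, and it is irreducible over k(t):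
   clearing denominators in a relation of lower degree between x and t = F(x)
   yields a nonzero polynomial over k vanishing at x, which would put t in k.
   Thus the Galois group is elementary abelian of order 2^n. *)

From HB Require Import structures.
From mathcomp Require Import all_boot all_order all_algebra all_fingroup all_solvable all_field fraction.
From mathcomp Require Import generic_quotient mxabelem ring.
Set Implicit Arguments.
Unset Strict Implicit.
Unset Printing Implicit Defensive.

Import GRing.Theory.
Local Open Scope ring_scope.

Local Notation tofrac := (@FracField.tofrac _).
Local Notation "x %:F" := (tofrac x).

Section ClearDenominators.
Variable R : idomainType.

Lemma tofrac_mul_denom (x : {fraction R}) :
  exists a b : R, b != 0 /\ x * b%:F = a%:F.
Proof.
elim/quotW: x => r; exists (\n_r), (\d_r); split; first exact: denom_ratioP.
unlock FracField.tofrac.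
transitivity (\pi_({fraction R}) (FracField.mulf r (Ratio \d_r 1)))%qT.
  by rewrite FracField.pi_mul.
apply/eqmodP; rewrite /= FracField.equivfE /FracField.mulf /=.
by rewrite !numden_Ratio ?mulf_neq0 ?oner_neq0 ?denom_ratioP // !mulr1 mulrC.
Qed.

Lemma poly_fraction_mul_denom (q : {poly {fraction R}}) :
  exists2 w : R, w != 0 & exists Q : {poly R}, map_poly tofrac Q = w%:F *: q.
Proof.
elim/poly_ind: q => [|q c [w nz_w [Q QE]]].
  by exists 1; [exact: oner_neq0 | exists 0; rewrite rmorph0 scaler0].
have [a [b [nz_b cb]]] := tofrac_mul_denom c.
exists (w * b); first by rewrite mulf_neq0.
exists (Q * b%:P * 'X + (a * w)%:P).
rewrite rmorphD !rmorphM /= map_polyX !map_polyC QE /= -cb.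
rewrite -!mul_polyC !polyCM; ring.
Qed.

End ClearDenominators.

(* Substituting t := F(X) in a nonzero Q(t, X) of X-degree below deg F leaves a
   nonzero polynomial: the monomials Q_i(F) X^i have degrees deg Q_i * deg F + i,
   pairwise distinct modulo deg F, so the largest one cannot cancel. *)
Lemma comp_coef_sum_neq0 (R : idomainType) (F : {poly R}) (Q : {poly {poly R}}) :
  (1 < size F)%N -> (size Q < size F)%N -> Q != 0 ->
  \sum_(i < size Q) (Q`_i \Po F) * 'X^i != 0.
Proof.
move=> sF sQ nzQ; set D := (size F).-1.
have sQD : (size Q <= D)%N by rewrite -ltnS prednK // ltnW.
have lcF : lead_coef F != 0 by rewrite lead_coef_eq0 -size_poly_gt0 (ltn_trans _ sF).
have lead_comp q : q != 0 -> lead_coef (q \Po F) != 0.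
  by move=> nzq; rewrite lead_coef_comp // mulf_neq0 ?expf_neq0 // lead_coef_eq0.
have size_comp q : q != 0 -> size (q \Po F) = ((size q).-1 * D).+1.
  by move=> nzq; rewrite -size_comp_poly prednK // size_poly_gt0 -lead_coef_eq0 lead_comp.
pose e (i : nat) := ((size (Q`_i)%R).-1 * D + i)%N.
have lastQ : ((size Q).-1 < size Q)%N by rewrite prednK // size_poly_gt0.
have nz_last : Q`_(Ordinal lastQ) != 0 by rewrite -lead_coefE lead_coef_eq0.
have [i0 nz_i0 max_i0] : exists2 i0 : 'I_(size Q), Q`_i0 != 0 &
    forall j : 'I_(size Q), Q`_j != 0 -> (e j <= e i0)%N.
  by case: (@arg_maxnP _ _ (fun i : 'I_(size Q) => Q`_i != 0) (fun i => e i) nz_last) => i; exists i.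
apply/negP => /eqP /(congr1 (fun p : {poly R} => p`_(e i0))).
rewrite coef_sum coef0 (bigD1 i0) //= big1 ?addr0.
  rewrite coefMXn /e ltnNge leq_addl /= addnK -size_comp_poly -lead_coefE.
  by apply/eqP; apply: lead_comp.
move=> j neq_ji0; have [->|nz_j] := eqVneq Q`_j 0; first by rewrite comp_poly0 mul0r coef0.
have lt_e : (e j < e i0)%N.
  rewrite ltn_neqAle max_i0 // andbT; apply: contra neq_ji0 => /eqP e_ji0.
  have : (e j %% D = e i0 %% D)%N by rewrite e_ji0.
  rewrite /e !modnMDl !modn_small ?(leq_trans (ltn_ord _) sQD) //.
  by move=> ji0; apply/eqP/ord_inj.
rewrite coefMXn; case: ltnP => // le_j; apply: nth_default.
by rewrite size_comp // leq_subRL // addnC.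
Qed.

Lemma root_map_closed (k : closedFieldType) (L : idomainType)
    (iota : {rmorphism k -> L}) (p : {poly k}) (x : L) :
  p != 0 -> root (map_poly iota p) x -> exists c, x = iota c.
Proof.
move=> nz_p; have [r ->] := closed_field_poly_normal p.
rewrite map_polyZ rootE hornerZ mulf_eq0 fmorph_eq0 lead_coef_eq0 (negbTE nz_p) /=.
rewrite rmorph_prod horner_prod prodf_seq_eq0 => /hasP[z _ /=].
by rewrite map_polyXsubC hornerXsubC subr_eq0 => /eqP ->; exists z.
Qed.

Section Iterates.
Variable R : comNzRingType.

Lemma poly_iterS (p : {poly R}) n : poly_iter p n.+1 = p \Po poly_iter p n.
Proof. by []. Qed.

Lemma map_poly_iter (S : comNzRingType) (g : {rmorphism R -> S}) p n :
  map_poly g (poly_iter p n) = poly_iter (map_poly g p) n.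
Proof. by elim: n => [|n IH]; rewrite ?map_polyX // map_comp_poly IH. Qed.

Lemma deriv_poly_iter (p : {poly R}) c n :
  p^`() = c%:P -> (poly_iter p n)^`() = (c ^+ n)%:P.
Proof.
move=> dp; elim: n => [|n IH]; first by rewrite derivX.
by rewrite poly_iterS deriv_comp IH dp comp_polyC -polyCM exprS.
Qed.

Hypothesis pcharR2 : 2%N \in [pchar R].

Definition affine_additive (p : {poly R}) :=
  forall x y, p.[x + y] = p.[x] + p.[y] + p.[0].

Lemma quadratic_affine_additive (a2 a1 a0 : R) :
  affine_additive (a2 *: 'X^2 + a1 *: 'X + a0%:P).
Proof.
set p := _ + _ + _ => x y.
have -> : p.[x + y] = p.[x] + p.[y] + p.[0] + (a2 * x * y - a0) *+ 2.
  by rewrite /p !(hornerD, hornerZ, hornerXn, hornerX, hornerC); ring.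
by rewrite -mulr_natr (pcharf0 pcharR2) mulr0 addr0.
Qed.

Lemma affine_additive_comp p q :
  affine_additive p -> affine_additive q -> affine_additive (p \Po q).
Proof.
move=> ap aq x y; rewrite !horner_comp aq !ap.
by rewrite addrAC -[_ + p.[0] + p.[0]]addrA addrr_pchar2 // addr0.
Qed.

Lemma affine_additive_iter p n : affine_additive p -> affine_additive (poly_iter p n).
Proof.
move=> ap; elim: n => [|n IH] x y; first by rewrite !hornerX addr0.
exact: affine_additive_comp.
Qed.

Lemma deriv_quadratic_pchar2 (a2 a1 a0 : R) :
  (a2 *: 'X^2 + a1 *: 'X + a0%:P)^`() = a1%:P.
Proof.
rewrite !derivE -mulr_natr -polyC_natr (pcharf0 pcharR2).
by rewrite polyC0 !mulr0 scaler0 add0r addr0 alg_polyC.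
Qed.

End Iterates.

Lemma size_poly_iter (R : idomainType) (p : {poly R}) n :
  (1 < size p)%N -> size (poly_iter p n) = ((size p).-1 ^ n).+1.
Proof.
move=> sp; elim: n => [|n IH]; first by rewrite size_polyX.
have pos : (0 < (size p).-1 ^ n.+1)%N by rewrite expn_gt0 -subn1 subn_gt0 sp.
have := size_comp_poly p (poly_iter p n); rewrite -poly_iterS IH /= -expnS.
by move=> sizeE; rewrite -sizeE prednK //; move: pos; rewrite -sizeE; case: (size _).
Qed.

Section IteratedQuadratic.
Variables (k : closedFieldType) (a2 a1 a0 : k).
Hypothesis pchar2 : 2%N \in [pchar k].
Hypothesis a2a1_neq0 : a2 * a1 != 0.
Variable L : splittingFieldType (ratfun k).

Lemma a2_neq0 : a2 != 0.
Proof. by move: a2a1_neq0; rewrite mulf_eq0 negb_or => /andP[]. Qed.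

Lemma a1_neq0 : a1 != 0.
Proof. by move: a2a1_neq0; rewrite mulf_eq0 negb_or => /andP[]. Qed.

Definition quad : {poly k} := a2 *: 'X^2 + a1 *: 'X + a0%:P.

Definition kL : {rmorphism k -> L} := (GRing.in_alg L \o tofrac \o polyC)%FUN.

Definition tL : L := GRing.in_alg L (tvar k).

Definition iterL n : {poly L} := map_poly kL (poly_iter quad n).

Lemma size_quad : size quad = 3%N.
Proof.
rewrite /quad -addrA size_polyDl size_scale ?a2_neq0 // size_polyXn //.
rewrite (leq_ltn_trans (size_polyD _ _)) // gtn_max.
by rewrite (leq_ltn_trans (size_scale_leq _ _)) ?size_polyX // (leq_ltn_trans (size_polyC_leq1 _)).
Qed.

Lemma size_iterL n : size (iterL n) = (2 ^ n).+1.
Proof. by rewrite size_map_poly size_poly_iter size_quad. Qed.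

Lemma pcharL2 : 2%N \in [pchar L].
Proof. exact: rmorph_pchar kL _ pchar2. Qed.

Lemma iterL_affine_additive n : affine_additive (iterL n).
Proof.
rewrite /iterL map_poly_iter; apply: (affine_additive_iter pcharL2).
rewrite /quad !rmorphD /= !map_polyZ map_polyXn map_polyX map_polyC /=.
exact: quadratic_affine_additive pcharL2 _ _ _.
Qed.

Lemma deriv_iterL n : (iterL n)^`() = (kL a1 ^+ n)%:P.
Proof.
rewrite deriv_map /quad (deriv_poly_iter _ (deriv_quadratic_pchar2 pchar2 _ _ _)) map_polyC.
by congr _%:P; exact: rmorphXn.
Qed.

Lemma iter_minus_tE n : map_poly (GRing.in_alg L) (iter_minus_t quad n) = iterL n - tL%:P.
Proof.
rewrite /iter_minus_t rmorphB /= map_polyC -map_poly_comp.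
by congr (_ - _); apply: eq_map_poly.
Qed.

Lemma size_iterL_sub_t n : size (iterL n - tL%:P) = (2 ^ n).+1.
Proof.
rewrite size_polyDl size_iterL // size_polyN (leq_ltn_trans (size_polyC_leq1 _)) //.
by rewrite ltnS expn_gt0.
Qed.

Lemma iterL_sub_t_over1 n : iterL n - tL%:P \is a polyOver 1%VS.
Proof. by rewrite -iter_minus_tE; apply/polyOver1P; eexists. Qed.

Lemma tL_neq_kL c : tL != kL c.
Proof.
apply/eqP => /fmorph_inj /eqP; rewrite /tvar tofrac_eq => /eqP X_C.
by have := size_polyX k; rewrite X_C size_polyC; case: (c != 0).
Qed.

Lemma horner_kL_tL (q : {poly k}) : (map_poly kL q).[tL] = GRing.in_alg L q%:F.
Proof.
rewrite -[in RHS](comp_polyXr q) /comp_poly -horner_map -map_poly_comp.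
by rewrite -(horner_map (GRing.in_alg L)) -map_poly_comp.
Qed.

Lemma root_iterL_size (x : L) n (m : {poly ratfun k}) :
  (iterL n).[x] = tL -> m != 0 -> root (map_poly (GRing.in_alg L) m) x ->
  (2 ^ n < size m)%N.
Proof.
move=> Fx nz_m mx; rewrite ltnNge; apply/negP => small_m.
have tofrac_inj : injective (@FracField.tofrac {poly k}).
  by move=> ? ? /eqP; rewrite tofrac_eq => /eqP.
have [w nz_w [Q QE]] := poly_fraction_mul_denom m.
have sQ : size Q = size m.
  by rewrite -(size_map_inj_poly tofrac_inj) ?rmorph0 // QE size_scale ?tofrac_eq0.
set Z := \sum_(i < size Q) (Q`_i \Po poly_iter quad n) * 'X^i.
have nz_Z : Z != 0.
  apply: comp_coef_sum_neq0; rewrite ?sQ ?size_poly_iter ?size_quad //.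
  - by rewrite ltnS expn_gt0.
  - by rewrite -size_poly_gt0 sQ size_poly_gt0.
suff /(root_map_closed nz_Z) [c xE] : root (map_poly kL Z) x.
  by have /eqP[] := tL_neq_kL (poly_iter quad n).[c]; rewrite -horner_map -xE.
have Zx : (map_poly kL Z).[x] = (map_poly (GRing.in_alg L \o tofrac) Q).[x].
  rewrite rmorph_sum horner_sum horner_coef size_map_inj_poly; last first.
  - by rewrite /= tofrac0 scale0r.
  - by move=> ? ? /fmorph_inj /tofrac_inj.
  apply: eq_bigr => i _; rewrite rmorphM /= map_polyXn map_comp_poly hornerM.
  by rewrite horner_comp hornerXn Fx horner_kL_tL coef_map.
by rewrite rootE Zx map_poly_comp QE map_polyZ hornerZ (rootP mx) mulr0.
Qed.

Lemma adjoin_degree_root_iterL (x : L) n :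
  (iterL n).[x] = tL -> adjoin_degree 1%VS x = (2 ^ n)%N.
Proof.
move=> Fx; have root_x : root (iterL n - tL%:P) x by rewrite rootE !hornerE Fx subrr.
apply/eqP; rewrite eqn_leq; apply/andP; split; rewrite -ltnS -size_minPoly.
  rewrite -(size_iterL_sub_t n) dvdp_leq ?minPoly_dvdp ?iterL_sub_t_over1 //.
  by rewrite -size_poly_gt0 size_iterL_sub_t.
have /polyOver1P[m mE] := minPolyOver 1%VS x.
have nz_m : m != 0 by rewrite -(map_poly_eq0 (GRing.in_alg L)) -mE monic_neq0 ?monic_minPoly.
by rewrite mE size_map_poly (root_iterL_size Fx) // -mE root_minPoly.
Qed.

Lemma roots_iterL_sub (x y : L) n :
  (iterL n).[x] = tL -> (iterL n).[y] = tL -> y - x \in 1%VS.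
Proof.
move=> Fx Fy; set G := poly_iter quad n - ((poly_iter quad n).[0])%:P.
have nz_G : G != 0.
  rewrite -size_poly_gt0 size_polyDl size_poly_iter ?size_quad //.
  by rewrite size_polyN (leq_ltn_trans (size_polyC_leq1 _)) // ltnS expn_gt0.
suff /(root_map_closed nz_G) [c ->] : root (map_poly kL G) (y - x).
  exact: rpredZ (mem1v _).
have := iterL_affine_additive n (y - x) x; rewrite subrK Fy Fx.
have -> : map_poly kL G = iterL n - ((iterL n).[0])%:P.
  by rewrite rmorphB; congr (_ - _); rewrite /iterL -(rmorph0 kL) horner_map; exact: map_polyC.
move=> Fsum; rewrite rootE hornerD hornerN hornerC (oppr_pchar2 pcharL2).
by apply/eqP/(addIr tL); rewrite add0r {2}Fsum addrAC.
Qed.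

Lemma minPoly_root_iterL (x y : L) n :
  (iterL n).[x] = tL -> root (minPoly 1%VS x) y -> (iterL n).[y] = tL.
Proof.
move=> Fx /(root_dvdp (minPoly_dvdp (iterL_sub_t_over1 n) _)).
by rewrite !rootE !hornerE Fx subrr eqxx subr_eq0 => /(_ isT) /eqP.
Qed.

Lemma gal_root_iterL_expg2 (x : L) n s :
  (iterL n).[x] = tL -> s \in 'Gal(<<1; x>> / 1)%g -> (s ^+ 2 = 1)%g.
Proof.
move=> Fx gal_s; set v := s x - x.
have Fsx : (iterL n).[s x] = tL.
  by apply: minPoly_root_iterL Fx _; rewrite root_minPoly_gal ?subv_adjoin ?memv_adjoin.
have sv : s v = v := fixed_gal (subv_adjoin _ _) gal_s (roots_iterL_sub Fx Fsx).
apply/eqP; rewrite gal_adjoin_eq ?groupX ?group1 // expgS expg1 galM ?memv_adjoin //.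
have sxE : s x = x + v by rewrite /v addrC subrK.
by rewrite gal_id sxE linearD /= sv sxE -addrA addrr_pchar2 ?pcharL2 // addr0.
Qed.

Lemma separable_iterL_sub_t n : separable_poly (iterL n - tL%:P).
Proof.
rewrite unlock derivB derivC subr0 deriv_iterL -[(_ ^+ n)%:P]alg_polyC.
by rewrite coprimepZr ?coprimep1 // expf_neq0 // fmorph_eq0 a1_neq0.
Qed.

Lemma splitting_root_iterL n (E : {subfield L}) :
  splittingFieldFor 1 (iterL n - tL%:P) E ->
  exists2 x, (iterL n).[x] = tL & E = <<1; x>>%AS.
Proof.
move=> [rs split_rs Ers].
have root_rs r : r \in rs -> (iterL n).[r] = tL.
  move=> rs_r; have := eqp_root split_rs r; rewrite root_prod_XsubC rs_r => /rootP.
  by move/eqP; rewrite !hornerE subr_eq0 => /eqP.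
case: rs split_rs Ers root_rs => [|x rs] split_rs Ers root_rs.
  by have /eqp_size := split_rs; rewrite big_nil size_poly1 size_iterL_sub_t => -[] /eqP; rewrite expn_eq0.
have Fx := root_rs x (mem_head _ _); exists x => //; apply: val_inj; rewrite /= -Ers.
apply/eqP; rewrite eqEsubv; apply/andP; split.
  apply/Fadjoin_seqP; split; first exact: subv_adjoin.
  move=> r rs_r; rewrite -[r](subrK x) rpredD ?memv_adjoin //.
  exact: subvP (subv_adjoin _ _) _ (roots_iterL_sub Fx (root_rs r rs_r)).
apply/FadjoinP; split; first exact: subv_adjoin_seq.
by apply: seqv_sub_adjoin; rewrite mem_head.
Qed.

End IteratedQuadratic.

Lemma isog_C2pow (gT : finGroupType) (G : {group gT}) n :
  (2.-abelem G)%g -> #|G| = (2 ^ n)%N -> (G \isog C2pow n)%g.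
Proof.
move=> abG cardG; rewrite (isog_abelem_card _ abG) cardG; apply/andP; split.
  exact: (@mx_Fp_abelem 2 1 n).
by rewrite cardsT card_mx card_ord mul1n.
Qed.

Theorem theorem5p5 (k : closedFieldType) (char2 : 2%N \in [pchar k])
  (a2 a1 a0 : k) (ha : a2 * a1 != 0)
  (L : splittingFieldType (ratfun k)) (E : {subfield L}) (n : nat) :
  splittingFieldFor 1%VS
    (map_poly (GRing.in_alg L) (iter_minus_t (a2 *: 'X^2 + a1 *: 'X + a0%:P) n)) E ->
  ('Gal(E / 1%VS))%G \isog C2pow n.
Proof.
rewrite -/(quad a2 a1 a0) iter_minus_tE => splitE.
have galE : galois 1 E.
  apply/splitting_galoisField; exists (iterL a2 a1 a0 L n - (tL L)%:P); split => //.
  - exact: iterL_sub_t_over1.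
  - exact: separable_iterL_sub_t.
have [x Fx Ex] := splitting_root_iterL char2 ha splitE; rewrite Ex in galE *.
apply: isog_C2pow.
  by apply/exponent2_abelem/exponentP => s; apply: gal_root_iterL_expg2 Fx.
by rewrite -galois_dim //= -adjoin_degreeE (adjoin_degree_root_iterL ha Fx).
Qed.
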